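(* Let $\alpha\in\mathbb{N}_0$. For all $n\in\mathbb{N}$ (i.e. $n\ge1$), $$(\alpha+2)!\,\big[L_{2,x}^{\alpha}+n\big]T_n^{\alpha}(x)=-(n+1)_{\alpha}(\alpha+1)(\alpha+2)\,L_{n-1}^{\alpha+2}(x),$$ $$\big[L_{2\alpha+4,x}^{\alpha}+(n)_{\alpha+2}\big]L_n^{\alpha}(x)=(n+1)_{\alpha}(\alpha+1)(\alpha+2)\,L_{n-1}^{\alpha+2}(x).$$ For $n=0$ both left-hand sides vanish.
   Context: $D_x^i$ is the $i$-fold derivative; $(a)_k$ is the Pochhammer symbol. $L_n^{\gamma}(x)=\frac{(\gamma+1)_n}{n!}{}_1F_1(-n;\gamma+1;x)$ are the Laguerre polynomials. $L_{2,x}^{\alpha}y=xy''+(\alpha+1-x)y'$ and $L_{2\alpha+4,x}^{\alpha}y(x)=(-1)^{\alpha+1}e^x x\,D_x^{\alpha+2}\{e^{-x}D_x^{\alpha+2}[x^{\alpha+1}y(x)]\}$. $T_0^\alpha=0$ and for $n\ge1$, $T_n^{\alpha}(x)=-t_n^{\alpha}\,x\,L_{n-1}^{\alpha+2}(x)$ with $t_n^{\alpha}=(\alpha+2)_{n-1}/n!$. *)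

From HB Require Import structures.
From mathcomp Require Import all_boot all_order all_algebra.
Set Implicit Arguments. Unset Strict Implicit. Unset Printing Implicit Defensive.
Import Order.TTheory GRing.Theory Num.Theory.
Local Open Scope ring_scope.

Definition poch {R : numFieldType} (a : R) (k : nat) : R :=
  \prod_(i < k) (a + i%:R).

(* Terminating confluent hypergeometric polynomial 1F1(-n; b; x)
   = \sum_{k=0}^n (-n)_k / ((b)_k k!) x^k  (terms with k > n vanish). *)
Definition hyp1F1neg {R : numFieldType} (n : nat) (b : R) : {poly R} :=
  \sum_(k < n.+1) ((poch (- (n%:R)) k) / (poch b k * (k`!)%:R)) *: 'X^k.

Definition Laguerre {R : numFieldType} (n : nat) (gamma : R) : {poly R} :=
  (poch (gamma + 1) n / (n`!)%:R) *: hyp1F1neg n (gamma + 1).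

Definition L2op {R : numFieldType} (alpha : nat) (y : {poly R}) : {poly R} :=
  'X * y^`(2) + ((alpha.+1)%:R%:P - 'X) * y^`().

(* For a polynomial q, e^x D^k (e^{-x} q(x)) = (D - 1)^k q(x) (conjugation
   identity e^x D e^{-x} = D - 1); this is how the exponential weight
   in the higher-order operator is expressed on polynomials. *)
Definition expConjD {R : numFieldType} (k : nat) (q : {poly R}) : {poly R} :=
  iter k (fun p => p^`() - p) q.

(* L_{2alpha+4,x}^alpha y = (-1)^(alpha+1) e^x x D^{alpha+2} { e^{-x} D^{alpha+2} [x^{alpha+1} y] }. *)
Definition L4op {R : numFieldType} (alpha : nat) (y : {poly R}) : {poly R} :=
  ((-1) ^+ alpha.+1) *: ('X * expConjD alpha.+2 (('X^(alpha.+1) * y)^`(alpha.+2))).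

Definition tcoef {R : numFieldType} (n alpha : nat) : R :=
  poch (alpha.+2)%:R n.-1 / (n`!)%:R.

Definition Tpoly {R : numFieldType} (n alpha : nat) : {poly R} :=
  if n is 0 then 0 else
  - (tcoef n alpha *: ('X * Laguerre n.-1 (alpha.+2)%:R)).

From HB Require Import structures.
From mathcomp Require Import all_boot all_order all_algebra.
From mathcomp Require Import ring.
Import Order.TTheory GRing.Theory Num.Theory.
Local Open Scope ring_scope.

(* Written as L_n^g = sum_k (-1)^k C(n+g, g+k) x^k / k!, the classical relations
   L_n^(g+1) = L_n^g + L_(n-1)^(g+1), (L_n^g)' = -L_(n-1)^(g+1),
   x L_(n-1)^(g+1) = (n+g) L_(n-1)^g - n L_n^g, D^g (x^g L_n^g) = (n+g)!/n! L_n^0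
   and the Laguerre equation become binomial identities.
   Since L_2^a (x u) = x (L_2^(a+2) u - u) + (a+1) u, the first identity is the
   Laguerre equation for L_(n-1)^(a+2).  For the second, D^(a+2) (x^(a+1) L_n^a)
   is a combination of L_(n-1)^1 and L_(n-2)^1, and D - 1 raises both indices;
   the recurrence and Pascal's rule then bring both sides to the basis
   L_n^(a+2), L_(n-1)^(a+2), L_(n-2)^(a+2). *)

Section Laguerre.
Variable R : numFieldType.
Implicit Types (p u : {poly R}).

Lemma natr_fact_neq0 n : n`!%:R != 0 :> R.
Proof. by rewrite pnatr_eq0 -lt0n fact_gt0. Qed.

Ltac natr_neq0 := rewrite ?nat1r ?natr1 -?natrM -?natrD ?pnatr_eq0 -?lt0n
  ?addn_gt0 ?muln_gt0 ?fact_gt0 ?ltn0Sn ?orbT //=.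

Lemma natr_ffact n m : (m <= n)%N -> (n ^_ m)%:R = n`!%:R / (n - m)`!%:R :> R.
Proof.
move=> le_mn; rewrite -(ffact_fact le_mn) natrM mulfK //; exact: natr_fact_neq0.
Qed.

Lemma natr_bin n m : (m <= n)%N ->
  'C(n, m)%:R = n`!%:R / (m`!%:R * (n - m)`!%:R) :> R.
Proof.
move=> le_mn; rewrite -(bin_fact le_mn) !natrM mulfK //.
by rewrite mulf_neq0 ?natr_fact_neq0.
Qed.

Lemma natr_binS n m : 'C(n, m.+1)%:R = (n%:R - m%:R) / m.+1%:R * 'C(n, m)%:R :> R.
Proof.
have [le_mn | lt_nm] := leqP m n; last by rewrite !bin_small ?mulr0 // ltnW.
rewrite -natrB // -mulrA mulrCA -natrM -mul_bin_left natrM mulKf //; natr_neq0.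
Qed.

Lemma natr_mul_bin_down n m :
  n%:R * 'C(n.-1, m)%:R = (n%:R - m%:R) * 'C(n, m)%:R :> R.
Proof.
have [le_mn | lt_nm] := leqP m n; first by rewrite -natrB // -!natrM mul_bin_down.
by rewrite !bin_small ?mulr0 // (leq_ltn_trans (leq_pred n)).
Qed.

Lemma pochS (a : R) k : poch a k.+1 = poch a k * (a + k%:R).
Proof. by rewrite /poch big_ord_recr. Qed.

Lemma poch_nat m k : poch m.+1%:R k = ((m + k) ^_ k)%:R :> R.
Proof.
elim: k => [|k IHk]; first by rewrite /poch big_ord0.
by rewrite pochS IHk addnS ffactnS natrM -natrD mulrC.
Qed.

Lemma poch_opp_nat n k : poch (- n%:R) k = (-1) ^+ k * (n ^_ k)%:R :> R.
Proof.
elim: k => [|k IHk]; first by rewrite /poch big_ord0 mul1r.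
rewrite pochS IHk ffactnSr natrM exprS.
have [le_kn | lt_nk] := leqP k n; last by rewrite ffact_small // !(mulr0, mul0r).
by rewrite natrB //; ring.
Qed.

(* [lag N g] is L_(N-g)^g; it vanishes for N < g, i.e. L_n^g = 0 for n < 0. *)
Definition lag N g : {poly R} :=
  \poly_(k < N.+1) ((-1) ^+ k * 'C(N, g + k)%:R / k`!%:R).

Lemma coef_lag N g k : (lag N g)`_k = (-1) ^+ k * 'C(N, g + k)%:R / k`!%:R.
Proof.
rewrite coef_poly; case: ltnP => // lt_Nk.
by rewrite bin_small ?mulr0 ?mul0r // (leq_trans lt_Nk) ?leq_addl.
Qed.

Lemma lag_diag N : lag N N = 1.
Proof.
apply/polyP => k; rewrite coef_lag coefC; case: k => [|k] /=.
  by rewrite addn0 binn expr0 fact0 mul1r divr1.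
by rewrite bin_small ?(mulr0, mul0r) // addnS ltnS leq_addr.
Qed.

Lemma Laguerre_lag n g : Laguerre n g%:R = lag (n + g) g.
Proof.
apply/polyP => k; rewrite coef_lag /Laguerre /hyp1F1neg coefZ.
rewrite -(poly_def _ (fun k => poch (- n%:R) k / (poch (g%:R + 1) k * k`!%:R))).
rewrite coef_poly natr1 !poch_nat poch_opp_nat.
have [le_kn | lt_nk] := ltnP k n.+1; last first.
  by rewrite mulr0 bin_small ?mulr0 ?mul0r // addnC ltn_add2l.
rewrite !natr_ffact ?leq_addl // natr_bin; last by rewrite [(n + g)%N]addnC leq_add2l.
rewrite !addnK [(n + g)%N]addnC subnDl.
by field; natr_neq0.
Qed.

Lemma lagSS N g : lag N.+1 g.+1 = lag N g + lag N g.+1.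
Proof. by apply/polyP => k; rewrite coefD !coef_lag addSn binS natrD; ring. Qed.

Lemma deriv_lag N g : (lag N g)^`() = - lag N g.+1.
Proof.
apply/polyP => k; rewrite coef_deriv coefN !coef_lag -mulr_natr addnS addSn.
by rewrite exprS factS natrM; field; natr_neq0.
Qed.

Lemma lag_shift2 N g :
  lag N.+1 g = lag N.+3 g.+2 - 2%:R *: lag N.+2 g.+2 + lag N.+1 g.+2.
Proof. by rewrite (lagSS N.+2) (lagSS N.+1 g) (lagSS N.+1 g.+1) scaler_nat; ring. Qed.

Lemma mulX_lag n g :
  'X * lag (n + g) g.+1 = (n + g)%:R *: lag (n + g).-1 g - n%:R *: lag (n + g) g.
Proof.
apply/polyP => -[|k]; rewrite coefXM coefB !coefZ !coef_lag /=.
  by rewrite !addn0 expr0 fact0 !mul1r !divr1 natr_mul_bin_down natrD; ring.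
rewrite [RHS](_ : _ = (-1) ^+ k.+1 / k.+1`!%:R *
  ((n + g)%:R * 'C((n + g).-1, g + k.+1)%:R - n%:R * 'C(n + g, g + k.+1)%:R)); last by ring.
rewrite natr_mul_bin_down exprS factS addnS -addSn !natrD natrM.
by field; natr_neq0.
Qed.

Lemma derivn_Xn_mul_lag n g :
  ('X^g * lag (n + g) g)^`(g) = ((n + g) ^_ g)%:R *: lag n 0.
Proof.
apply/polyP => k; rewrite coef_derivn coefXnM ltnNge leq_addr /= addKn coefZ.
rewrite !coef_lag add0n -[LHS]mulr_natr.
have [le_kn | lt_nk] := leqP k n; last first.
  by rewrite !bin_small ?(mulr0, mul0r) // addnC ltn_add2l.
rewrite !natr_ffact ?leq_addl ?leq_addr // !natr_bin //; last by rewrite addnC leq_add2r.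
rewrite addKn addnK [(n + g)%N]addnC subnDl.
by field; natr_neq0.
Qed.

Lemma lag_euler N g :
  'X * (lag N g.+1)^`() + g.+1%:R *: lag N g.+1
  = (N%:R - g%:R) *: lag N g - 'X * (lag N g)^`().
Proof.
apply/polyP => k; rewrite coefB coefD !coefZ !coefXM !coef_lag.
case: k => [|k] /=.
  by rewrite !addn0 natr_binS; field; natr_neq0.
rewrite coef_deriv -mulr_natr coef_deriv -[X in _ = _ - X]mulr_natr !coef_lag.
rewrite addSn !addnS natr_binS.
by field; natr_neq0.
Qed.

Lemma L2op_lag n g : L2op g (lag (n + g) g) + n%:R *: lag (n + g) g = 0.
Proof.
have := lag_euler (n + g) g.
rewrite -[lag _ g.+1]opprK -deriv_lag derivN natrD addrK => /esym/eqP.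
rewrite -subr_eq0 => /eqP <-.
by rewrite /L2op derivnS /= -!mul_polyC; ring.
Qed.

Lemma L2opZ a c u : L2op a (c *: u) = c *: L2op a u.
Proof. by rewrite /L2op derivZ derivnZ scalerDr !scalerAr. Qed.

Lemma L2op_mulX a u : L2op a ('X * u) = 'X * (L2op a.+2 u - u) + a.+1%:R *: u.
Proof.
have derivXM p : ('X * p)^`() = p + 'X * p^`() by rewrite derivM derivX mul1r.
by rewrite /L2op derivnS /= !derivXM derivD derivXM -!mul_polyC !polyC_natr; ring.
Qed.

Lemma L2op_mulX_lag m a :
  L2op a ('X * lag (m + a.+2) a.+2) + m.+1%:R *: ('X * lag (m + a.+2) a.+2)
  = a.+1%:R *: lag (m + a.+2) a.+2.
Proof.
rewrite L2op_mulX -[RHS]add0r -(mulr0 'X) -(L2op_lag m a.+2).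
by rewrite -!mul_polyC; ring.
Qed.

Lemma expConjDS k u : expConjD k.+1 u = (expConjD k u)^`() - expConjD k u.
Proof. by []. Qed.

Lemma expConjDZ k c u : expConjD k (c *: u) = c *: expConjD k u.
Proof. by elim: k => [|k IHk] //; rewrite !expConjDS IHk derivZ scalerBr. Qed.

Lemma expConjDB k u v : expConjD k (u - v) = expConjD k u - expConjD k v.
Proof. by elim: k => [|k IHk] //; rewrite !expConjDS IHk derivB; ring. Qed.

Lemma expConjD_lag k N g : expConjD k (lag N g) = (-1) ^+ k *: lag (N + k) (g + k).
Proof.
elim: k => [|k IHk]; first by rewrite scale1r !addn0.
rewrite expConjDS IHk derivZ -scalerBr deriv_lag !addnS lagSS exprS -scalerA.
by rewrite scaleN1r -scalerN; congr (_ *: _); ring.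
Qed.

Lemma derivnS_Xn_mul_lag m a :
  ('X^(a.+1) * lag (m.+1 + a) a)^`(a.+2)
  = ((m + a.+1) ^_ a.+1)%:R *: lag m 1 - ((m.+1 + a.+1) ^_ a.+1)%:R *: lag m.+1 1.
Proof.
rewrite -[lag _ a](addrK (lag (m.+1 + a) a.+1)) -lagSS.
rewrite -[(m.+1 + a).+1]addnS [(m.+1 + a)%N]addSnnS mulrBr derivnS derivnB.
by rewrite !derivn_Xn_mul_lag derivB !derivZ !deriv_lag !scalerN opprK addrC.
Qed.

Lemma L4op_lag m a :
  L4op a (lag (m.+1 + a) a)
  = 'X * (((m.+1 + a.+1) ^_ a.+1)%:R *: lag (m.+1 + a.+2) a.+3
          - ((m + a.+1) ^_ a.+1)%:R *: lag (m + a.+2) a.+3).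
Proof.
rewrite /L4op derivnS_Xn_mul_lag expConjDB !expConjDZ !expConjD_lag !add1n.
rewrite scalerAr; congr ('X * _).
have sgn c : (-1) ^+ a.+1 * (c * (-1) ^+ a.+2) = - c :> R.
  by rewrite [(-1) ^+ a.+2]exprS mulrCA mulN1r !mulrN -expr2 sqrr_sign mulr1.
by rewrite !scalerA scalerBr !scalerA !sgn !scaleNr opprK addrC.
Qed.

Lemma L4op_lag_eigen m a :
  L4op a (lag (m.+1 + a) a) + ((m + a.+2) ^_ a.+2)%:R *: lag (m.+1 + a) a
  = ((m.+1 + a) ^_ a * a.+1 * a.+2)%:R *: lag (m + a.+2) a.+2.
Proof.
rewrite L4op_lag mulrBr -!scalerAr !mulX_lag !addSn !addnS /= (lag_shift2 (m + a) a).
set h := ((m + a).+1 ^_ a)%N.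
have e1 : ((m + a).+2 ^_ a.+1 = (m + a).+2 * h)%N by rewrite ffactnS.
have e2 : ((m + a).+1 ^_ a.+1 = h * m.+1)%N by rewrite ffactnSr -addSn addnK.
have e3 : ((m + a).+2 ^_ a.+2 = (m + a).+2 * (h * m.+1))%N by rewrite ffactnS e2.
by rewrite e3 e1 e2 !scaler_nat; ring.
Qed.

Lemma fact_mul_tcoef m a : (a.+2)`!%:R * tcoef m.+1 a = poch m.+2%:R a * a.+2%:R :> R.
Proof.
rewrite /tcoef /= !poch_nat !natr_ffact ?leq_addl // !addnK factS natrM.
by rewrite !addSn [(a + m)%N]addnC; field; natr_neq0.
Qed.

End Laguerre.

Theorem theorem2p3 (R : numFieldType) (alpha : nat) :
  (forall n : nat, (1 <= n)%N ->
     ((alpha.+2)`!)%:R *: (L2op alpha (Tpoly n alpha : {poly R}) + n%:R *: Tpoly n alpha)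
       = - (poch n.+1%:R alpha * (alpha.+1)%:R * (alpha.+2)%:R) *: Laguerre n.-1 (alpha.+2)%:R
     /\
     L4op alpha (Laguerre n alpha%:R) + poch (n%:R : R) alpha.+2 *: Laguerre n alpha%:R
       = (poch n.+1%:R alpha * (alpha.+1)%:R * (alpha.+2)%:R) *: Laguerre n.-1 (alpha.+2)%:R)
  /\
  (L2op alpha (Tpoly 0 alpha : {poly R}) + 0%:R *: Tpoly 0 alpha = 0
   /\ L4op alpha (Laguerre 0 alpha%:R) + poch (0%:R : R) alpha.+2 *: Laguerre 0 alpha%:R = 0 :> {poly R}).
Proof.
split=> [[//|m] _|]; first split.
- rewrite /Tpoly /= Laguerre_lag -scaleNr L2opZ scalerA [_%:R * _]mulrC -scalerA -scalerDr.
  rewrite L2op_mulX_lag !scalerA; congr (_ *: _).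
  by rewrite mulrN fact_mul_tcoef mulNr; ring.
- rewrite !Laguerre_lag /= !poch_nat -!natrM; exact: L4op_lag_eigen.
split; first by rewrite /Tpoly /L2op scaler0 addr0 !raddf0 !mulr0 addr0.
rewrite Laguerre_lag lag_diag /L4op mulr1 derivnXn ffact_small // mulr0n.
rewrite -(scale0r (0 : {poly R})) expConjDZ !scale0r mulr0 scaler0 add0r.
by rewrite /poch big_ord_recl /= addr0 mul0r scale0r.
Qed.
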